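(* $c(8)\ge 6$.
   Context: $\mathbb{F}_q$ is the finite field with $q$ elements. Hamming distance $d(u,v)=|\{i:u_i\ne v_i\}|$ on $\mathbb{F}_q^3$; $B(u)=\{v:d(u,v)\le1\}$; $E(u)=\bigcup_{\lambda\in\mathbb{F}_q}B(\lambda u)$. A set $\mathcal{H}\subseteq\mathbb{F}_q^3$ is a short covering if $\bigcup_{h\in\mathcal{H}}E(h)=\mathbb{F}_q^3$; $c(q)$ is the minimum cardinality of a short covering of $\mathbb{F}_q^3$. *)

From mathcomp Require Import all_boot all_algebra all_field.
Set Implicit Arguments. Unset Strict Implicit. Unset Printing Implicit Defensive.
Import GRing.Theory.
Local Open Scope ring_scope.

Definition vec3 (F : finFieldType) := {ffun 'I_3 -> F}.

Definition hdist (F : finFieldType) (u v : vec3 F) : nat :=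
  #|[set i : 'I_3 | u i != v i]|.

Definition ball1 (F : finFieldType) (u : vec3 F) : {set vec3 F} :=
  [set v : vec3 F | (hdist u v <= 1)%N].

Definition vscale (F : finFieldType) (l : F) (u : vec3 F) : vec3 F :=
  [ffun i => l * u i].

Definition Eset (F : finFieldType) (u : vec3 F) : {set vec3 F} :=
  \bigcup_(l : F) ball1 (vscale l u).

Definition short_covering (F : finFieldType) (H : {set vec3 F}) : Prop :=
  \bigcup_(h in H) Eset h = [set: vec3 F].

From mathcomp Require Import all_boot all_algebra all_field.
From mathcomp Require Import zify.
Set Implicit Arguments. Unset Strict Implicit. Unset Printing Implicit Defensive.
Import GRing.Theory.
Local Open Scope ring_scope.

(* Suppose #|H| < q - 1.  For distinct coordinates i, j the ratios h_j / h_i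
   (h in H, both entries nonzero) then miss some rho in F^*.  A vector of H
   covering (1, rho, s) at (i, j, k) cannot agree with it at both i and j, so
   it agrees at k and at one of i, j.  Hence every s in F^* is a ratio
   h_k / h_i or rho times a ratio h_k / h_j: the pairs {i,k} and {j,k} are
   jointly supported by at least q - 1 vectors of H, and s = 0 yields a
   nonzero vector of H vanishing at k.  Double counting these incidences
   against #|H| gives 3 (q - 1) + 10 <= 6 #|H|, which fails for q = 8 and
   #|H| <= 5. *)

Definition o0 : 'I_3 := @Ordinal 3 0 isT.
Definition o1 : 'I_3 := @Ordinal 3 1 isT.
Definition o2 : 'I_3 := @Ordinal 3 2 isT.

Lemma ord3P (t : 'I_3) : [\/ t = o0, t = o1 | t = o2].
Proof.
case: t => [[|[|[|//]]] lt3]; [constructor 1 | constructor 2 | constructor 3];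
  exact: val_inj.
Qed.

Lemma ord3_others (k : 'I_3) : exists i j, [/\ i != j, i != k & j != k].
Proof. by case: (ord3P k) => ->; [exists o1, o2 | exists o0, o2 | exists o0, o1]. Qed.

Lemma forall_ord3 (p : pred 'I_3) : [forall t, p t] = [&& p o0, p o1 & p o2].
Proof.
apply/forallP/and3P => [pt | [p0 p1 p2] t]; first by split; apply: pt.
by case: (ord3P t) => ->.
Qed.

Lemma exists_ord3 (p : pred 'I_3) : [exists t, p t] = [|| p o0, p o1 | p o2].
Proof.
apply/existsP/or3P => [[t] | ]; last by case; [exists o0 | exists o1 | exists o2].
by case: (ord3P t) => -> pt; [constructor 1 | constructor 2 | constructor 3].
Qed.

Lemma card_setI_sum (T : finType) (A : {set T}) (P : pred T) :
  #|[set x in A | P x]| = (\sum_(x in A) P x)%N.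
Proof.
rewrite -sum1_card (eq_bigl (fun x => (x \in A) && P x)) => [|x]; last by rewrite inE.
by rewrite big_mkcondr /=; apply: eq_bigr => x _; case: (P x).
Qed.

Lemma neq0_factors (R : idomainType) (x y c : R) :
  c != 0 -> c = x * y -> (x != 0) && (y != 0).
Proof. by move=> c0 cxy; rewrite -negb_or -mulf_eq0 -cxy. Qed.

Lemma hdist_le1_agree (F : finFieldType) (u v : vec3 F) :
  (hdist u v <= 1)%N -> exists m, forall t, t != m -> v t = u t.
Proof.
rewrite /hdist; set D := [set t | u t != v t] => /card_le1_eqP D_le1.
have [m Dm | D0] := pickP (mem D).
  exists m => t tm; apply/esym/eqP; apply: contraNT tm => /= uvt.
  by apply/eqP; apply: D_le1; rewrite // inE.
by exists o0 => t _; apply/esym/eqP; move: (D0 t); rewrite /= inE => /negbFE.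
Qed.

Lemma short_covering_agree (F : finFieldType) (H : {set vec3 F}) :
  short_covering H -> forall v : vec3 F,
  exists2 h, h \in H & exists l m, forall t, t != m -> v t = l * h t.
Proof.
move=> covH v; have : v \in \bigcup_(h in H) Eset h by rewrite covH inE.
case/bigcupP => h hH /bigcupP [l _]; rewrite inE => /hdist_le1_agree [m vm].
by exists h => //; exists l, m => t /vm ->; rewrite ffunE.
Qed.

Section Supports.

Variables (F : finFieldType) (H : {set vec3 F}).

Definition supp2 (a b : 'I_3) := [set h in H | (h a != 0) && (h b != 0)].

Definition ratios (a b : 'I_3) := [set (h : vec3 F) b / h a | h in supp2 a b].

Definition zero_at (c : 'I_3) := [set h in H | (h c == 0) && [exists t, h t != 0]].

Definition nonfull := [set h in H | ~~ [forall t, h t != 0]].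

Lemma supp2C a b : supp2 a b = supp2 b a.
Proof. by apply/setP => h; rewrite !inE (andbC (h a != 0)). Qed.

Lemma card_ratios a b : (#|ratios a b| <= #|supp2 a b|)%N.
Proof. exact: leq_imset_card. Qed.

Lemma card_supp2 a b : (#|supp2 a b| <= #|H|)%N.
Proof. by apply/subset_leq_card/subsetP => h; rewrite inE => /andP[]. Qed.

Lemma mem_ratios h l c d a b : h \in H -> c != 0 -> d != 0 ->
  c = l * h a -> d = l * h b -> d / c \in ratios a b.
Proof.
move=> hH c0 d0 ca db.
have /andP[l0 ha0] := neq0_factors c0 ca.
have /andP[_ hb0] := neq0_factors d0 db.
apply/imsetP; exists h; first by rewrite inE hH ha0 hb0.
by rewrite ca db invfM mulrACA divff // mul1r mulrC.
Qed.

Lemma exists_nonratio a b : (#|H| < #|F|.-1)%N ->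
  exists2 rho : F, rho != 0 & rho \notin ratios a b.
Proof.
move=> small; have : ~~ ([set~ 0 : F] \subset ratios a b).
  apply: contraTN small => /subset_leq_card; rewrite cardsC1 -leqNgt => le.
  exact: leq_trans le (leq_trans (card_ratios a b) (card_supp2 a b)).
by case/subsetPn => rho; rewrite in_setC1; exists rho.
Qed.

(* Weighing h by the pairs of its nonzero entries, its zero entries (if
   h != 0) and its non-fullness gives exactly 3, or 1 for h = 0. *)
Lemma double_count :
  (#|supp2 o0 o1| + #|supp2 o0 o2| + #|supp2 o1 o2| + #|nonfull|
   + (#|zero_at o0| + #|zero_at o1| + #|zero_at o2|) <= 3 * #|H|)%N.
Proof.
rewrite !card_setI_sum -!big_split mulnC -sum_nat_const; apply: leq_sum => h _.
rewrite forall_ord3 exists_ord3 /=.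
by case: (h o0 == 0); case: (h o1 == 0); case: (h o2 == 0).
Qed.

Lemma zero_at_nonfull c : zero_at c \subset nonfull.
Proof.
apply/subsetP => h; rewrite !inE => /and3P [-> hc _] /=.
by rewrite negb_forall; apply/existsP; exists c; rewrite negbK.
Qed.

Lemma two_nonfull : (forall c, zero_at c != set0) -> (1 < #|nonfull|)%N.
Proof.
move=> zero_atN0; have /set0Pn [z z0] := zero_atN0 o0.
have := z0; rewrite inE => /and3P [_ _ /existsP [t zt]].
have /set0Pn [z' z't] := zero_atN0 t.
have := z't; rewrite inE => /and3P [_ z't0 _].
apply/card_gt1P; exists z, z'; split.
- exact: (subsetP (zero_at_nonfull o0)).
- exact: (subsetP (zero_at_nonfull t)).
- by apply: contraTneq z't0 => <-.
Qed.

End Supports.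

Section CoveringLines.

Variables (F : finFieldType) (H : {set vec3 F}).
Hypothesis covH : short_covering H.
Variables (i j k : 'I_3).
Hypotheses (ij : i != j) (ik : i != k) (jk : j != k).

(* Cover the vector with entries 1, rho, s at i, j, k: since rho is not a
   ratio, the coordinate where agreement fails cannot be k. *)
Lemma covering_line rho s : rho != 0 -> rho \notin ratios H i j ->
  exists2 h, h \in H & exists l, s = l * h k /\ (1 = l * h i \/ rho = l * h j).
Proof.
move=> rho0 rho_nr.
pose v : vec3 F := [ffun t => if t == i then 1 else if t == j then rho else s].
have vi : v i = 1 by rewrite ffunE eqxx.
have vj : v j = rho by rewrite ffunE eq_sym (negbTE ij) eqxx.
have vk : v k = s by rewrite ffunE eq_sym (negbTE ik) eq_sym (negbTE jk).
have [h hH [l [m vm]]] := short_covering_agree covH v.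
exists h => //; exists l.
case: (eqVneq m i) vm => [-> | mi] vm.
  by split; [rewrite -vk vm // eq_sym | right; rewrite -vj vm // eq_sym].
case: (eqVneq m j) vm => [-> | mj] vm.
  by split; [rewrite -vk vm // eq_sym | left; rewrite -vi vm // eq_sym].
have ei : 1 = l * h i by rewrite -vi vm // eq_sym.
have ej : rho = l * h j by rewrite -vj vm // eq_sym.
by move: (mem_ratios hH (oner_neq0 F) rho0 ei ej); rewrite divr1 (negbTE rho_nr).
Qed.

Hypothesis small : (#|H| < #|F|.-1)%N.

Lemma card_supp2_lower : (#|F|.-1 <= #|supp2 H i k| + #|supp2 H j k|)%N.
Proof.
have [rho rho0 rho_nr] := exists_nonratio i j small.
have cover : [set~ 0 : F] \subset ratios H i k :|: [set rho * x | x in ratios H j k].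
  apply/subsetP => s; rewrite in_setC1 inE => s0.
  have [h hH [l [sk [ei | ej]]]] := covering_line s rho0 rho_nr.
    by rewrite -[s]divr1 (mem_ratios hH (oner_neq0 F) s0 ei sk).
  apply/orP; right; apply/imsetP; exists (s / rho); first exact: mem_ratios ej sk.
  by rewrite mulrC divfK.
rewrite -(cardsC1 (0 : F)); apply: leq_trans (subset_leq_card cover) _.
apply: leq_trans (leq_card_setU _ _) (leq_add (card_ratios _ _ _) _).
exact: leq_trans (leq_imset_card _ _) (card_ratios _ _ _).
Qed.

Lemma zero_at_neq0 : zero_at H k != set0.
Proof.
have [rho rho0 rho_nr] := exists_nonratio i j small.
have [h hH [l [hk e]]] := covering_line 0 rho0 rho_nr.
have /andP[l0 h0] : (l != 0) && [exists t, h t != 0].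
  case: e => [ei | ej].
    by have /andP[-> hi0] := neq0_factors (oner_neq0 F) ei; apply/existsP; exists i.
  by have /andP[-> hj0] := neq0_factors rho0 ej; apply/existsP; exists j.
apply/set0Pn; exists h; rewrite inE hH h0 andbT.
by move/eqP: hk; rewrite eq_sym mulf_eq0 (negbTE l0).
Qed.

End CoveringLines.

Theorem short_covering_card_bound (F : finFieldType) (H : {set vec3 F}) :
  short_covering H -> (#|H| < #|F|.-1)%N -> (3 * #|F|.-1 + 10 <= 6 * #|H|)%N.
Proof.
move=> covH small.
have S0 := card_supp2_lower covH (i := o1) (j := o2) (k := o0) isT isT isT small.
have S1 := card_supp2_lower covH (i := o0) (j := o2) (k := o1) isT isT isT small.
have S2 := card_supp2_lower covH (i := o0) (j := o1) (k := o2) isT isT isT small.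
rewrite !(supp2C H _ o0) (supp2C H o2 o1) in S0 S1.
have zero_atN0 c : zero_at H c != set0.
  have [i [j [ij ic jc]]] := ord3_others c.
  by move: (zero_at_neq0 covH ij ic jc small).
have := two_nonfull zero_atN0; have := double_count H.
move: (zero_atN0 o0) (zero_atN0 o1) (zero_atN0 o2); rewrite -!card_gt0.
lia.
Qed.

Theorem proposition21 (F : finFieldType) (hF : #|F| = 8%N)
  (H : {set vec3 F}) (hH : short_covering H) : (6 <= #|H|)%N.
Proof.
rewrite leqNgt; apply/negP => small.
have := short_covering_card_bound hH; rewrite hF.
lia.
Qed.
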